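(* For every positive integer $k$, $$\sum_{\mathbf{o}\in\mathcal{O}_k}P(\mathbf{o})=1,$$ i.e., $P$ is a probability measure on $\mathcal{O}_k$.
   Context: For a positive integer $k$, $\mathcal{O}_k$ is the set of all multisets $\mathbf{o}=\{o_1,\dots,o_r\}$ of odd positive integers with $\sum_{i=1}^r o_i=k$ (e.g. $\mathcal{O}_6=\{\{1,5\},\{3,3\},\{3,1,1,1\},\{1,1,1,1,1,1\}\}$). For $\mathbf{o}\in\mathcal{O}_k$ with $r$ elements, $c(\mathbf{o},i)$ denotes the number of times $i$ appears in $\mathbf{o}$, and $P(\mathbf{o})=\dfrac{2^{r-1}}{\prod_{i=1}^k i^{c(\mathbf{o},i)}\,c(\mathbf{o},i)!}$. *)

From mathcomp Require Import all_boot all_order all_algebra.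
Set Implicit Arguments. Unset Strict Implicit. Unset Printing Implicit Defensive.
Import GRing.Theory Num.Theory.
Local Open Scope ring_scope.

(* A multiset o of positive integers with sum k is encoded by its
   multiplicity function c, c i = c(o,i), for i in {0,..,k}
   (any element of o is <= k, and every multiplicity is <= k). *)
Definition mult (k : nat) := {ffun 'I_k.+1 -> 'I_k.+1}.

Definition Ok (k : nat) : {set mult k} :=
  [set c : mult k | [forall i : 'I_k.+1, ~~ odd i ==> (nat_of_ord (c i) == 0%N)]
                    && ((\sum_(i < k.+1) i * c i)%N == k)].

Definition msize (k : nat) (c : mult k) : nat := (\sum_(i < k.+1) c i)%N.

Definition Pw (k : nat) (c : mult k) : rat :=
  (2%:R ^+ (msize c).-1) /
  (\prod_(i < k.+1) ((i : nat)%:R ^+ (c i : nat) * ((c i : nat)`!)%:R)).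

(* For weights a_i, E(s) = \sum_{c : \sum_i i c_i = s} \prod_i a_i^(c_i) / c_i! is the
   coefficient of x^s in exp(\sum_i a_i x^i); differentiating, s E(s) = \sum_i i a_i E(s - i),
   which is proved directly by removing one part i from each multiset.  With a_i = 2/i for odd
   i and 0 otherwise, \sum_i a_i x^i = log((1 + x) / (1 - x)), so E(0) = 1 and E(s) = 2 for
   s > 0, as the recurrence confirms by induction.  Multisets with an even part have weight 0,
   and on O_k the weight is 2 P(o); hence \sum P = E(k) / 2 = 1. *)

From mathcomp Require Import all_boot all_order all_algebra.
From mathcomp Require Import zify ring.
Set Implicit Arguments. Unset Strict Implicit. Unset Printing Implicit Defensive.
Import GRing.Theory Num.Theory.
Local Open Scope ring_scope.

Section Multiplicities.
Variable N : nat.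
Implicit Types (c : mult N) (i j : 'I_N.+1).

Definition msum c : nat := (\sum_(i < N.+1) i * c i)%N.
Definition odd_supported c := [forall i : 'I_N.+1, ~~ odd i ==> (c i == 0 :> nat)].

Definition mincr i c : mult N := [ffun j => if j == i then inord (c j).+1 else c j].
Definition mdecr i c : mult N := [ffun j => if j == i then inord (c j).-1 else c j].

Lemma mincr_id i c : mincr i c i = (if (c i < N)%N then (c i).+1 else 0%N) :> nat.
Proof. by rewrite ffunE eqxx /inord val_insubd. Qed.

Lemma mincr_neq i j c : j != i -> mincr i c j = c j.
Proof. by rewrite ffunE => /negbTE ->. Qed.

Lemma mincrK i c : (c i < N)%N -> mdecr i (mincr i c) = c.
Proof.
move=> ciN; apply/ffunP => j; rewrite !ffunE.
case: eqP => [->|//]; apply: val_inj => /=.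
by rewrite (@inordK N (c i).+1) ?ltnS //= inord_val.
Qed.

Lemma mdecrK i c : (0 < c i)%N -> mincr i (mdecr i c) = c.
Proof.
move=> ci_gt0; apply/ffunP => j; rewrite !ffunE.
case: eqP => [->|//]; apply: val_inj => /=.
have ci_le := ltn_ord (c i).
by rewrite inordK ?inordK; lia.
Qed.

Lemma big_mincr (R : Type) (idx : R) (op : Monoid.com_law idx)
    (F : 'I_N.+1 -> nat -> R) i c : (c i < N)%N ->
  \big[op/idx]_j F j (mincr i c j) = op (F i (c i).+1) (\big[op/idx]_(j | j != i) F j (c j)).
Proof.
move=> ciN; rewrite (bigD1 i) //= mincr_id ciN.
by rewrite (eq_bigr (fun j => F j (c j))) // => j /mincr_neq ->.
Qed.

Lemma msum_mincr i c : (c i < N)%N -> msum (mincr i c) = (msum c + i)%N.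
Proof.
move=> ciN; rewrite /msum (big_mincr addn (fun j x => j * x)%N) //.
rewrite [in RHS](bigD1 i) //=; lia.
Qed.

Lemma leq_mul_msum i c : (i * c i <= msum c)%N.
Proof. by rewrite /msum (bigD1 i) //= leq_addr. Qed.

Lemma leq_msum_msize c : (msum c <= N * msize c)%N.
Proof.
rewrite /msum /msize big_distrr /=; apply: leq_sum => i _.
by rewrite leq_mul2r -ltnS ltn_ord orbT.
Qed.

Lemma odd_supportedP c i : odd_supported c -> ~~ odd i -> c i = 0%N :> nat.
Proof. by move/forallP/(_ i)/implyP => c_odd /c_odd /eqP. Qed.

Lemma msum_mincrE i c s : (0 < i)%N -> (i <= s <= N)%N ->
  [&& msum (mincr i c) == s, 0 < mincr i c i & mdecr i (mincr i c) == c]%N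
  = (msum c == s - i)%N.
Proof.
move=> i_gt0 /andP[le_is le_sN]; rewrite mincr_id.
case: (ltnP (c i) N) => [ciN | Nci]; first by rewrite mincrK // msum_mincr // eqxx andbT; lia.
rewrite /= andbF; apply/esym/negP => /eqP sumc.
have := leq_mul_msum i c; rewrite sumc; nia.
Qed.

Section ExponentialFormula.
Variables (R : numFieldType) (a : nat -> R).

Definition mweight c : R := \prod_(i < N.+1) (a i ^+ c i / (c i)`!%:R).
Definition expcoef s : R := \sum_(c : mult N | msum c == s) mweight c.

Lemma mweight_mincr i c : (c i < N)%N ->
  (c i).+1%:R * mweight (mincr i c) = a i * mweight c.
Proof.
move=> ciN; rewrite /mweight (big_mincr (GRing.mul : Monoid.com_law 1)
  (fun j x => a j ^+ x / x`!%:R)) // [in RHS](bigD1 i) //=.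
rewrite !mulrA; congr (_ * _).
have fact_neq0 : (c i)`!%:R != 0 :> R by rewrite pnatr_eq0 -lt0n fact_gt0.
by rewrite factS natrM exprS; field; rewrite fact_neq0 -(natrD R 1) pnatr_eq0.
Qed.

Lemma mweight_eq0 i c : a i = 0 -> (0 < c i)%N -> mweight c = 0.
Proof.
move=> ai0 ci_gt0; rewrite /mweight (bigD1 i) //= ai0 expr0n.
by rewrite eqn0Ngt ci_gt0 !mul0r.
Qed.

Lemma expcoef0 : a 0%N = 0 -> expcoef 0%N = 1.
Proof.
pose z : mult N := [ffun _ => ord0].
have msum_z : msum z = 0%N by rewrite /msum big1 // => j _; rewrite ffunE muln0.
move=> a0; rewrite /expcoef (bigD1 z) /= ?msum_z // big1 ?addr0.
  by rewrite /mweight big1 // => j _; rewrite ffunE expr0 divr1.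
move=> c /andP[/eqP sumc cz]; apply: (@mweight_eq0 ord0) => //.
rewrite lt0n; apply: contraNneq cz => c0; apply/eqP/ffunP => j.
rewrite ffunE; apply: val_inj => /=.
have [j0 | j_gt0] := posnP j; last by have := leq_mul_msum j c; rewrite sumc; nia.
by rewrite (_ : j = ord0) //; apply: val_inj.
Qed.

Lemma sum_mweight_mul i s : (i <= s <= N)%N ->
  \sum_(c : mult N | msum c == s) (i * c i)%:R * mweight c = i%:R * a i * expcoef (s - i)%N.
Proof.
move=> le_isN; have [i0 | i_gt0] := posnP i.
  by rewrite i0 !mul0r big1 // => c _; rewrite mul0n mul0r.
rewrite (bigID (fun c : mult N => 0 < c i)%N) /= [X in _ + X]big1 ?addr0; last first.
  by move=> c /andP[_]; rewrite -eqn0Ngt => /eqP ->; rewrite muln0 mul0r.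
rewrite (reindex_onto (mincr i) (mdecr i)) /=; last by move=> c /andP[_ /mdecrK].
rewrite /expcoef mulr_sumr; apply: eq_big => c; rewrite -andbA (msum_mincrE _ i_gt0 le_isN) //.
move=> /eqP sumc.
have ciN : (c i < N)%N by have := leq_mul_msum i c; rewrite sumc; nia.
by rewrite mincr_id ciN natrM -mulrA mweight_mincr // mulrA.
Qed.

Lemma expcoef_rec s : (s <= N)%N ->
  s%:R * expcoef s = \sum_(i < s.+1) i%:R * a i * expcoef (s - i)%N.
Proof.
move=> le_sN; rewrite (big_ord_widen N.+1 (fun i : nat => i%:R * a i * expcoef (s - i)%N)) //.
rewrite {1}/expcoef mulr_sumr.
transitivity (\sum_(c : mult N | msum c == s) \sum_(i < N.+1) (i * c i)%:R * mweight c).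
  by apply: eq_bigr => c /eqP sumc; rewrite -mulr_suml -natr_sum -sumc.
rewrite exchange_big (bigID (fun i : 'I_N.+1 => i < s.+1)%N) /= [X in _ + X]big1 ?addr0.
  by apply: eq_bigr => i le_is; rewrite sum_mweight_mul // -ltnS le_is.
move=> i; rewrite -leqNgt => lt_si; apply: big1 => c /eqP sumc.
suff -> : c i = 0%N :> nat by rewrite muln0 mul0r.
by have := leq_mul_msum i c; rewrite sumc; nia.
Qed.

End ExponentialFormula.

Lemma sum_odd s : (\sum_(i < s) odd i)%N = s./2.
Proof.
elim: s => [|s IHs]; first by rewrite big_ord0.
by rewrite big_ord_recr /= IHs uphalf_half addnC.
Qed.

Section OddCoefficients.
Variable R : numFieldType.

Definition odd_coef n : R := if odd n then 2 / n%:R else 0.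

Lemma mul_odd_coef n : n%:R * odd_coef n = 2 * (odd n)%:R.
Proof.
rewrite /odd_coef; case: n => [|n]; first by rewrite mul0r /= mulr0n mulr0.
by case: ifP => _; rewrite ?mulr0 // mulrCA divff ?mulr1 ?pnatr_eq0.
Qed.

Lemma expcoef_odd_coef s : (0 < s <= N)%N -> expcoef odd_coef s = 2.
Proof.
elim/ltn_ind: s => s IHs /andP[s_gt0 le_sN].
have s_neq0 : s%:R != 0 :> R by rewrite pnatr_eq0 -lt0n.
apply: (mulfI s_neq0); rewrite expcoef_rec //.
under eq_bigr => i _ do rewrite mul_odd_coef.
rewrite big_ord_recr /= subnn expcoef0 // mulr1.
rewrite (eq_bigr (fun i : 'I_s => 2 * (odd i)%:R * 2)); last first.
  move=> i _; case: (boolP (odd i)) => [odd_i | _]; last by rewrite !mulr0 !mul0r.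
  have i_gt0 : (0 < i)%N by case: (nat_of_ord i) odd_i.
  by have lt_is := ltn_ord i; rewrite IHs //; lia.
rewrite -mulr_suml -mulr_sumr -natr_sum sum_odd.
rewrite -[in RHS](odd_double_half s) natrD -muln2 natrM; ring.
Qed.

Lemma mweight_odd_coef c : odd_supported c ->
  mweight odd_coef c = 2 ^+ msize c / \prod_(i < N.+1) (i%:R ^+ c i * (c i)`!%:R).
Proof.
move=> c_odd; rewrite /mweight /msize -prodrXr -prodf_div; apply: eq_bigr => i _.
rewrite /odd_coef; case: ifPn => [odd_i | even_i].
  by rewrite expr_div_n invfM mulrA.
by rewrite (odd_supportedP c_odd even_i) !expr0 !mul1r.
Qed.

Lemma expcoef_odd_supported s :
  expcoef odd_coef s = \sum_(c : mult N | odd_supported c && (msum c == s)) mweight odd_coef c.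
Proof.
rewrite /expcoef (bigID odd_supported) /= [X in _ + X]big1 ?addr0.
  by apply: eq_bigl => c; rewrite andbC.
move=> c /andP[_ /forallPn[i]]; rewrite negb_imply => /andP[even_i ci_neq0].
by apply: (@mweight_eq0 _ _ i); rewrite /odd_coef ?(negbTE even_i) ?lt0n.
Qed.

End OddCoefficients.

End Multiplicities.

Arguments odd_coef {R}.

Lemma Pw_mweight k (c : mult k) : (0 < k)%N -> c \in Ok k -> Pw c = mweight odd_coef c / 2.
Proof.
move=> k_gt0; rewrite inE => /andP[c_odd /eqP sumc].
have msize_gt0 : (0 < msize c)%N.
  by have := leq_msum_msize c; rewrite (_ : msum c = k) //; case: (msize c) => //; lia.
rewrite mweight_odd_coef // /Pw -[in RHS](prednK msize_gt0) exprS.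
by rewrite mulrAC [2 * _]mulrC mulfK // pnatr_eq0.
Qed.

Theorem lemmaA9 (k : nat) : (0 < k)%N -> \sum_(c in Ok k) Pw c = 1.
Proof.
move=> k_gt0; rewrite (eq_bigr _ (fun c => Pw_mweight k_gt0)) -mulr_suml.
rewrite (eq_bigl (fun c => odd_supported c && (msum c == k))) => [|c]; last by rewrite inE.
by rewrite -expcoef_odd_supported expcoef_odd_coef ?k_gt0 ?leqnn // divff.
Qed.
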